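(* Let $\mathbf{\Sigma}$ be a cluster pattern of rank $n$ with free coefficients at $t_0\in\mathbb{T}_n$, and let $\mathbf{\Sigma}'$ be a cluster pattern of rank $n$ with coefficients in any semifield $\mathbb{P}$ having the same $B$-pattern as $\mathbf{\Sigma}$. Then for any $t,t'\in\mathbb{T}_n$ and any permutation $\sigma\in S_n$: if $\Sigma_t=\sigma\Sigma_{t'}$, then $\Sigma'_t=\sigma\Sigma'_{t'}$.
   Context: A semifield is a multiplicative abelian group $\mathbb{P}$ with a commutative, associative addition $\oplus$ satisfying $(a\oplus b)c=ac\oplus bc$; $\mathbb{Q}\mathbb{P}$ is the fraction field of the group ring $\mathbb{Z}\mathbb{P}$. The universal semifield $\mathbb{Q}_{\mathrm{sf}}(\mathbf{y})$ ($\mathbf{y}=(y_1,\dots,y_n)$ formal variables) consists of rational functions in $\mathbf{y}$ expressible as ratios of nonzero polynomials with nonnegative integer coefficients. A seed with coefficients in $\mathbb{P}$ is $(\mathbf{x},\mathbf{y},B)$ with $\mathbf{x}$ a generating transcendence basis of an ambient field $\mathcal{F}\cong\mathbb{Q}\mathbb{P}(u_1,\dots,u_n)$ over $\mathbb{Q}\mathbb{P}$, $\mathbf{y}\in\mathbb{P}^n$, $B$ an $n\times n$ skew-symmetrizable integer matrix. With $[a]_+=\max(a,0)$ and $\hat y_i=y_i\prod_jx_j^{b_{ji}}$, the mutation $\mu_k$ is: $x'_k=x_k^{-1}\big(\prod_{j}x_j^{[-b_{jk}]_+}\big)\frac{1+\hat y_k}{1\oplus y_k}$, $x'_i=x_i$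 ($i\ne k$); $y'_k=y_k^{-1}$, $y'_i=y_iy_k^{[b_{ki}]_+}(1\oplus y_k)^{-b_{ki}}$ ($i\neq k$); $b'_{ij}=-b_{ij}$ if $i=k$ or $j=k$, and $b'_{ij}=b_{ij}+b_{ik}[b_{kj}]_++[-b_{ik}]_+b_{kj}$ otherwise. $\mathbb{T}_n$ is the $n$-regular tree with edges labeled $1,\dots,n$, distinct at each vertex. A cluster pattern is $\{\Sigma_t=(\mathbf{x}_t,\mathbf{y}_t,B_t)\}_{t\in\mathbb{T}_n}$ with $\Sigma_{t'}=\mu_k(\Sigma_t)$ whenever $t,t'$ are joined by an edge labeled $k$; its $B$-pattern is $\{B_t\}$. It has free coefficients at $t_0$ if its coefficient semifield is $\mathbb{Q}_{\mathrm{sf}}(\mathbf{y})$ and $\mathbf{y}_{t_0}=\mathbf{y}$. For $\sigma\in S_n$, $\sigma(\mathbf{x},\mathbf{y},B)=(\mathbf{x}',\mathbf{y}',B')$ with $x'_i=x_{\sigma^{-1}(i)}$, $y'_i=y_{\sigma^{-1}(i)}$, $b'_{ij}=b_{\sigma^{-1}(i)\sigma^{-1}(j)}$. *)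

From HB Require Import structures.
From mathcomp Require Import all_boot all_order all_algebra all_fingroup.
From mathcomp Require Import fraction.
From mathcomp.multinomials Require Import mpoly.
From Stdlib Require Import ProofIrrelevance.
Set Implicit Arguments. Unset Strict Implicit. Unset Printing Implicit Defensive.
Import GRing.Theory Num.Theory.
Local Open Scope ring_scope.

Definition nnpoly (n : nat) (p : {mpoly int[n]}) : Prop :=
  p != 0 /\ forall m, 0 <= p@_m.

Lemma nnpoly1 n : nnpoly (1 : {mpoly int[n]}).
Proof. split; first exact: oner_neq0. by move=> m; rewrite mcoeff1 ler0n. Qed.

Lemma nnpolyX n (i : 'I_n) : nnpoly ('X_i : {mpoly int[n]}).
Proof.
split; last by move=> m; rewrite mcoeffX ler0n.
apply/eqP=> h; have := @mcoeffXU n int i i; rewrite h mcoeff0 eqxx => /esym/eqP.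
by rewrite oner_eq0.
Qed.

Lemma nnpolyM n (p q : {mpoly int[n]}) : nnpoly p -> nnpoly q -> nnpoly (p * q).
Proof.
move=> [p0 pc] [q0 qc]; split; first exact: mulf_neq0.
move=> m; rewrite mcoeffM; apply: sumr_ge0 => k _; exact: mulr_ge0.
Qed.

Lemma nnpolyD n (p q : {mpoly int[n]}) : nnpoly p -> nnpoly q -> nnpoly (p + q).
Proof.
move=> [p0 pc] [q0 qc]; split; last by move=> m; rewrite mcoeffD addr_ge0.
case E: (msupp p) => [|m s]; first by move/eqP: E; rewrite msupp_eq0 (negPf p0).
have : m \in msupp p by rewrite E mem_head.
move=> hm; have {hm}: p@_m != 0 by rewrite mcoeff_eq0 hm.
move=> hm; apply/eqP => h.
have : (p + q)@_m = 0 by rewrite h mcoeff0.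
rewrite mcoeffD => /eqP; rewrite paddr_eq0 ?pc ?qc // => /andP[/eqP hp _].
by rewrite hp eqxx in hm.
Qed.

Record semifield := Semifield {
  sf_car :> Type;
  sf_one : sf_car;
  sf_mul : sf_car -> sf_car -> sf_car;
  sf_inv : sf_car -> sf_car;
  sf_add : sf_car -> sf_car -> sf_car;
  sf_mulA : associative sf_mul;
  sf_mulC : commutative sf_mul;
  sf_mul1 : left_id sf_one sf_mul;
  sf_mulV : forall a, sf_mul (sf_inv a) a = sf_one;
  sf_addA : associative sf_add;
  sf_addC : commutative sf_add;
  sf_mulDl : forall a b c, sf_mul (sf_add a b) c = sf_add (sf_mul a c) (sf_mul b c)
}.
Arguments sf_one {_}.
Arguments sf_mul {_}.
Arguments sf_inv {_}.
Arguments sf_add {_}.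

Definition sf_expn (P : semifield) (a : P) (k : nat) : P := iter k (sf_mul a) sf_one.
Definition sf_expz (P : semifield) (a : P) (z : int) : P :=
  match z with Posz k => sf_expn a k | Negz k => sf_inv (sf_expn a k.+1) end.

(** The universal semifield Q_sf(y_1,...,y_n) inside Q(y_1,...,y_n) =
    Frac(Z[y_1,...,y_n]): ratios of nonzero polynomials with nonnegative
    integer coefficients. *)
Definition ratfun (n : nat) := {fraction {mpoly int[n]}}.

Definition subtraction_free (n : nat) (f : ratfun n) : Prop :=
  exists p q : {mpoly int[n]}, [/\ nnpoly p, nnpoly q & f = tofrac p / tofrac q].

Definition Qsf_car (n : nat) := {f : ratfun n | subtraction_free f}.

Lemma Qsf_inj n (a b : Qsf_car n) : proj1_sig a = proj1_sig b -> a = b.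
Proof.
case: a b => [a pa] [b pb] /= E; subst b; f_equal; exact: proof_irrelevance.
Qed.

Lemma nnpoly_frac_neq0 n (p : {mpoly int[n]}) : nnpoly p -> tofrac p != 0.
Proof. by case=> p0 _; rewrite tofrac_eq0. Qed.

Lemma sf_free_neq0 n (f : ratfun n) : subtraction_free f -> f != 0.
Proof.
case=> p [q [hp hq ->]].
by rewrite mulf_neq0 ?invr_eq0 ?nnpoly_frac_neq0.
Qed.

Lemma sf_free1 n : subtraction_free (1 : ratfun n).
Proof. exists 1, 1; split; try exact: nnpoly1. by rewrite tofrac1 divr1. Qed.

Lemma sf_freeX n (i : 'I_n) : subtraction_free (tofrac 'X_i : ratfun n).
Proof. exists 'X_i, 1; split; try exact: nnpoly1; first exact: nnpolyX. by rewrite tofrac1 divr1. Qed.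

Lemma sf_freeM n (f g : ratfun n) :
  subtraction_free f -> subtraction_free g -> subtraction_free (f * g).
Proof.
case=> p1 [q1 [h1 k1 ->]] [p2 [q2 [h2 k2 ->]]].
exists (p1 * p2), (q1 * q2); split; try exact: nnpolyM.
by rewrite mulf_div !tofracM.
Qed.

Lemma sf_freeV n (f : ratfun n) : subtraction_free f -> subtraction_free f^-1.
Proof. case=> p [q [h k ->]]; exists q, p; split => //; by rewrite invf_div. Qed.

Lemma sf_freeD n (f g : ratfun n) :
  subtraction_free f -> subtraction_free g -> subtraction_free (f + g).
Proof.
case=> p1 [q1 [h1 k1 ->]] [p2 [q2 [h2 k2 ->]]].
exists (p1 * q2 + p2 * q1), (q1 * q2); split; try exact: nnpolyM.
  by apply: nnpolyD; apply: nnpolyM.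
by rewrite addf_div ?nnpoly_frac_neq0 // tofracD !tofracM.
Qed.

Definition Qsf_one n : Qsf_car n := exist _ 1 (@sf_free1 n).
Definition Qsf_mul n (a b : Qsf_car n) : Qsf_car n :=
  exist _ _ (sf_freeM (proj2_sig a) (proj2_sig b)).
Definition Qsf_inv n (a : Qsf_car n) : Qsf_car n :=
  exist _ _ (sf_freeV (proj2_sig a)).
Definition Qsf_add n (a b : Qsf_car n) : Qsf_car n :=
  exist _ _ (sf_freeD (proj2_sig a) (proj2_sig b)).

Lemma Qsf_mulA n : associative (@Qsf_mul n).
Proof. by move=> a b c; apply: Qsf_inj; rewrite /= mulrA. Qed.
Lemma Qsf_mulC n : commutative (@Qsf_mul n).
Proof. by move=> a b; apply: Qsf_inj; rewrite /= mulrC. Qed.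
Lemma Qsf_mul1 n : left_id (@Qsf_one n) (@Qsf_mul n).
Proof. by move=> a; apply: Qsf_inj; rewrite /= mul1r. Qed.
Lemma Qsf_mulV n (a : Qsf_car n) : Qsf_mul (Qsf_inv a) a = Qsf_one n.
Proof. by apply: Qsf_inj; rewrite /= mulVf // (sf_free_neq0 (proj2_sig a)). Qed.
Lemma Qsf_addA n : associative (@Qsf_add n).
Proof. by move=> a b c; apply: Qsf_inj; rewrite /= addrA. Qed.
Lemma Qsf_addC n : commutative (@Qsf_add n).
Proof. by move=> a b; apply: Qsf_inj; rewrite /= addrC. Qed.
Lemma Qsf_mulDl n (a b c : Qsf_car n) :
  Qsf_mul (Qsf_add a b) c = Qsf_add (Qsf_mul a c) (Qsf_mul b c).
Proof. by apply: Qsf_inj; rewrite /= mulrDl. Qed.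

Definition Qsf (n : nat) : semifield :=
  @Semifield (Qsf_car n) (Qsf_one n) (@Qsf_mul n) (@Qsf_inv n) (@Qsf_add n)
    (@Qsf_mulA n) (@Qsf_mulC n) (@Qsf_mul1 n) (@Qsf_mulV n)
    (@Qsf_addA n) (@Qsf_addC n) (@Qsf_mulDl n).

Definition Qsf_var (n : nat) (i : 'I_n) : Qsf n := exist _ _ (sf_freeX i).

(** The ambient field of a cluster pattern with coefficients in [P] is a field
    [F] together with the embedding [iota : P -> F] of the multiplicative group
    of [P] (it extends to ZP -> QP -> F).  [F] is isomorphic to QP(u_1..u_n)
    and [x] is a generating transcendence basis of [F] over QP exactly when
    the "monomials" iota(p) * x^a  (p in P, a in N^n) are Z-linearly
    independent in F (i.e. ZP -> F is injective and x is algebraically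
    independent over QP) and every element of F is a ratio of Z-linear
    combinations of such monomials (i.e. F = Frac(ZP[x]) = QP(x)). *)
Definition sf_hom (P : semifield) (F : fieldType) (iota : P -> F) : Prop :=
  iota sf_one = 1 /\ forall a b : P, iota (sf_mul a b) = iota a * iota b.

Definition zpx_eval (P : semifield) (F : fieldType) (iota : P -> F) (n : nat)
    (x : 'I_n -> F) (m : nat) (c : 'I_m -> int) (k : 'I_m -> P * ('I_n -> nat)) : F :=
  \sum_(i < m) (c i)%:~R * (iota (k i).1 * \prod_(j < n) x j ^+ (k i).2 j).

Definition gen_trbasis (P : semifield) (F : fieldType) (iota : P -> F) (n : nat)
    (x : 'I_n -> F) : Prop :=
  (forall (m : nat) (c : 'I_m -> int) (k : 'I_m -> P * ('I_n -> nat)),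
      injective k -> zpx_eval iota x c k = 0 -> forall i, c i = 0) /\
  (forall f : F, exists (m : nat) (c : 'I_m -> int) (k : 'I_m -> P * ('I_n -> nat))
                        (m' : nat) (c' : 'I_m' -> int) (k' : 'I_m' -> P * ('I_n -> nat)),
      zpx_eval iota x c' k' != 0 /\ f = zpx_eval iota x c k / zpx_eval iota x c' k').

Definition skew_symmetrizable (n : nat) (B : 'M[int]_n) : Prop :=
  exists d : 'I_n -> int, (forall i, 0 < d i) /\
    forall i j, d i * B i j = - (d j * B j i).

Record seed (n : nat) (P : semifield) (F : fieldType) := Seed {
  sx : 'I_n -> F;
  sy : 'I_n -> P;
  sB : 'M[int]_n }.
Arguments Seed {n P F}.
Arguments sx {n P F}.
Arguments sy {n P F}.
Arguments sB {n P F}.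

Definition is_seed (n : nat) (P : semifield) (F : fieldType) (iota : P -> F)
    (s : seed n P F) : Prop :=
  gen_trbasis iota (sx s) /\ skew_symmetrizable (sB s).

Definition posp (a : int) : int := Num.max a 0.

Definition mutate (n : nat) (P : semifield) (F : fieldType) (iota : P -> F)
    (k : 'I_n) (s : seed n P F) : seed n P F :=
  let x := sx s in let y := sy s in let B := sB s in
  Seed
    (fun i => if i == k then
       (x k)^-1 * (\prod_(j < n) x j ^ posp (- B j k))
       * (1 + iota (y k) * \prod_(j < n) x j ^ B j k)
       / iota (sf_add sf_one (y k))
     else x i)
    (fun i => if i == k then sf_inv (y k) else
       sf_mul (sf_mul (y i) (sf_expz (y k) (posp (B k i))))
              (sf_expz (sf_add sf_one (y k)) (- B k i)))
    (\matrix_(i, j) if (i == k) || (j == k) then - B i j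
                    else B i j + B i k * posp (B k j) + posp (- B i k) * B k j).

Definition perm_seed (n : nat) (P : semifield) (F : fieldType) (sigma : 'S_n)
    (s : seed n P F) : seed n P F :=
  Seed (fun i => sx s ((sigma^-1)%g i)) (fun i => sy s ((sigma^-1)%g i))
       (\matrix_(i, j) sB s ((sigma^-1)%g i) ((sigma^-1)%g j)).

Definition seed_eq (n : nat) (P : semifield) (F : fieldType) (s s' : seed n P F) : Prop :=
  (forall i, sx s i = sx s' i) /\ (forall i, sy s i = sy s' i) /\ sB s = sB s'.

(** * The n-regular tree T_n: vertices are reduced words in the labels,
    two vertices are joined by an edge labeled k iff one is obtained from the
    other by appending the letter k. *)
Definition tnode (n : nat) := {w : seq 'I_n | sorted (fun a b : 'I_n => a != b) w}.

Definition tedge (n : nat) (k : 'I_n) (t t' : tnode n) : Prop :=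
  proj1_sig t' = rcons (proj1_sig t) k \/ proj1_sig t = rcons (proj1_sig t') k.

Definition cluster_pattern (n : nat) (P : semifield) (F : fieldType) (iota : P -> F)
    (Sigma : tnode n -> seed n P F) : Prop :=
  sf_hom iota /\ (forall t, is_seed iota (Sigma t)) /\
  (forall (k : 'I_n) (t t' : tnode n), tedge k t t' ->
      seed_eq (Sigma t') (mutate iota k (Sigma t))).

Definition free_coeffs_at (n : nat) (F : fieldType)
    (Sigma : tnode n -> seed n (Qsf n) F) (t0 : tnode n) : Prop :=
  forall i, sy (Sigma t0) i = Qsf_var i.

From HB Require Import structures.
From mathcomp Require Import all_boot all_order all_algebra all_fingroup.
From mathcomp Require Import fraction.
From mathcomp.multinomials Require Import mpoly.
From mathcomp Require Import boolp.
Set Implicit Arguments. Unset Strict Implicit. Unset Printing Implicit Defensive.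
Import GRing.Theory Num.Theory.
Local Open Scope ring_scope.

(* The semifield map psi : Q_sf(y) -> P with psi y_i = y'_i (the coefficients
   of Sigma' at t0) exists by the universal property of Q_sf(y), and since
   coefficient mutation is subtraction-free, psi carries the coefficients of
   Sigma_t to those of Sigma'_t at every vertex.  Along the same induction,
   every cluster variable of Sigma_t is a ratio of integer combinations of the
   monomials iota(p) x^a in the initial cluster of Sigma, and the same formal
   ratio, with p read as psi p and x as the initial cluster of Sigma', gives
   the corresponding cluster variable of Sigma'_t.  The initial monomials of
   Sigma are linearly independent, so the result does not depend on the
   formal ratio chosen: each cluster variable of Sigma determines the
   corresponding one of Sigma'.  Hence the equality Sigma_t = sigma Sigma_t'
   transfers to Sigma'. *)

Section SemifieldTheory.
Variable P : semifield.
Implicit Types a b c d : P.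

Lemma sf_mulr1 a : sf_mul a sf_one = a.
Proof. by rewrite sf_mulC sf_mul1. Qed.

Lemma sf_mulrV a : sf_mul a (sf_inv a) = sf_one.
Proof. by rewrite sf_mulC sf_mulV. Qed.

Lemma sf_mulIr c : injective (sf_mul^~ c).
Proof.
by move=> a b /(congr1 (sf_mul^~ (sf_inv c))); rewrite -!sf_mulA sf_mulrV !sf_mulr1.
Qed.

Lemma sf_mulCA a b c : sf_mul a (sf_mul b c) = sf_mul b (sf_mul a c).
Proof. by rewrite sf_mulA [sf_mul a b]sf_mulC -sf_mulA. Qed.

Lemma sf_mulACA a b c d :
  sf_mul (sf_mul a b) (sf_mul c d) = sf_mul (sf_mul a c) (sf_mul b d).
Proof. by rewrite -sf_mulA (sf_mulCA b) sf_mulA. Qed.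

Lemma sf_invM a b : sf_inv (sf_mul a b) = sf_mul (sf_inv a) (sf_inv b).
Proof.
by apply: (@sf_mulIr (sf_mul a b)); rewrite sf_mulV sf_mulACA !sf_mulV sf_mul1.
Qed.

Lemma sf_inv1 : sf_inv (@sf_one P) = sf_one.
Proof. by rewrite -[sf_inv _]sf_mulr1 sf_mulV. Qed.

Lemma sf_invK a : sf_inv (sf_inv a) = a.
Proof. by apply: (@sf_mulIr (sf_inv a)); rewrite sf_mulV sf_mulrV. Qed.

Lemma sf_eq_div a b c d :
  sf_mul a d = sf_mul c b -> sf_mul a (sf_inv b) = sf_mul c (sf_inv d).
Proof.
move=> eq_ad_cb; apply: (@sf_mulIr (sf_mul b d)).
rewrite -!sf_mulA [sf_mul (sf_inv b) _]sf_mulA sf_mulV sf_mul1 eq_ad_cb.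
by rewrite [sf_mul b d]sf_mulC [sf_mul (sf_inv d) _]sf_mulA sf_mulV sf_mul1.
Qed.

End SemifieldTheory.

Section AdjoinZero.
Variable P : semifield.

(* [None] is the adjoined zero; [{classic P}] supplies the choice structure
   that semiring structures require. *)
Definition sf_with0 := option {classic P}.
HB.instance Definition _ := Choice.on sf_with0.

Definition with0_add (a b : sf_with0) : sf_with0 :=
  match a, b with
  | None, _ => b | _, None => a | Some u, Some v => Some (sf_add u v) end.

Definition with0_mul (a b : sf_with0) : sf_with0 :=
  match a, b with Some u, Some v => Some (sf_mul u v) | _, _ => None end.

Lemma with0_addA : associative with0_add.
Proof. by case=> [u|] [v|] [w|] //=; rewrite sf_addA. Qed.
Lemma with0_addC : commutative with0_add.
Proof. by case=> [u|] [v|] //=; rewrite sf_addC. Qed.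
Lemma with0_add0 : left_id None with0_add.
Proof. by case. Qed.
HB.instance Definition _ :=
  GRing.isNmodule.Build sf_with0 with0_addA with0_addC with0_add0.

Lemma with0_mulA : associative with0_mul.
Proof. by case=> [u|] [v|] [w|] //=; rewrite sf_mulA. Qed.
Lemma with0_mulC : commutative with0_mul.
Proof. by case=> [u|] [v|] //=; rewrite sf_mulC. Qed.
Lemma with0_mul1 : left_id (Some sf_one) with0_mul.
Proof. by case=> [u|] //=; rewrite sf_mul1. Qed.
Lemma with0_mulDl : left_distributive with0_mul with0_add.
Proof. by case=> [u|] [v|] [w|] //=; rewrite sf_mulDl. Qed.
Lemma with0_mul0 : left_zero None with0_mul.
Proof. by []. Qed.
HB.instance Definition _ := GRing.Nmodule_isComPzSemiRing.Build sf_with0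
  with0_mulA with0_mulC with0_mul1 with0_mulDl with0_mul0.

Implicit Types a b : sf_with0.

Lemma with0_addr_neq0 a b : a != 0 -> a + b != 0.
Proof. by case: a => // u _; case: b. Qed.

Lemma with0_mulf_neq0 a b : a != 0 -> b != 0 -> a * b != 0.
Proof. by case: a => // u _; case: b. Qed.

Lemma with0_expf_neq0 a k : a != 0 -> a ^+ k != 0.
Proof. by move=> a0; elim: k => // k IH; rewrite exprS with0_mulf_neq0. Qed.

Lemma with0_natr_neq0 k : (k.+1%:R : sf_with0) != 0.
Proof. by rewrite -add1n natrD with0_addr_neq0. Qed.

End AdjoinZero.

Lemma abszD_ge0 (a b : int) : 0 <= a -> 0 <= b -> (`|(a + b)%R| = `|a| + `|b|)%N.
Proof. by case: a => // a _; case: b. Qed.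

Section NonnegEval.
Variables (n : nat) (P : semifield) (y : 'I_n -> P).
Implicit Types (p q : {mpoly int[n]}) (m : 'X_{1..n}).

Definition pmono m : sf_with0 P := \prod_(i < n) (Some (y i) : sf_with0 P) ^+ m i.

Definition peval p : sf_with0 P := \sum_(m <- msupp p) `|p@_m|%N%:R * pmono m.

Lemma pmonoD m1 m2 : pmono (m1 + m2)%MM = pmono m1 * pmono m2.
Proof. by rewrite /pmono -big_split; apply: eq_bigr => i _; rewrite mnmDE exprD. Qed.

Lemma pmono_neq0 m : pmono m != 0.
Proof.
by rewrite /pmono; elim/big_rec: _ => // i a _ a0; rewrite with0_mulf_neq0 ?with0_expf_neq0.
Qed.

Lemma peval_seq (s : seq 'X_{1..n}) p : uniq s -> {subset msupp p <= s} ->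
  peval p = \sum_(m <- s) `|p@_m|%N%:R * pmono m.
Proof.
move=> uniq_s supp_s; rewrite [RHS](bigID (mem (msupp p))) /= [X in _ = _ + X]big1; last first.
  by move=> m; rewrite mcoeff_msupp negbK => /eqP ->; rewrite mul0r.
rewrite addr0 -big_filter; apply/perm_big/uniq_perm; rewrite ?filter_uniq ?msupp_uniq //.
by move=> m; rewrite mem_filter; case: (boolP (m \in msupp p)) => // /supp_s ->.
Qed.

Lemma pevalZX (c : int) m : 0 <= c -> peval (c *: 'X_[m]) = `|c|%N%:R * pmono m.
Proof.
move=> c_ge0; rewrite (@peval_seq [:: m]) ?big_seq1 ?mcoeffZ ?mcoeffX ?eqxx ?mulr1 //.
by move=> m' /msuppZ_le; rewrite msuppX.
Qed.

Lemma pevalD p q : (forall m, 0 <= p@_m) -> (forall m, 0 <= q@_m) ->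
  peval (p + q) = peval p + peval q.
Proof.
move=> p_ge0 q_ge0; set s := undup (msupp p ++ msupp q).
have uniq_s : uniq s by apply: undup_uniq.
rewrite (@peval_seq s (p + q)) //; last by move=> m /msuppD_le; rewrite mem_undup.
rewrite (@peval_seq s p) //; last by move=> m supp_m; rewrite mem_undup mem_cat supp_m.
rewrite (@peval_seq s q) //; last by move=> m supp_m; rewrite mem_undup mem_cat supp_m orbT.
rewrite -big_split; apply: eq_bigr => m _ /=.
by rewrite mcoeffD abszD_ge0 ?p_ge0 ?q_ge0 // natrD mulrDl.
Qed.

Lemma peval_sum (I : Type) (r : seq I) (F : I -> {mpoly int[n]}) :
  (forall i m, 0 <= (F i)@_m) -> peval (\sum_(i <- r) F i) = \sum_(i <- r) peval (F i).
Proof.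
move=> F_ge0; elim: r => [|i r IH]; first by rewrite !big_nil /peval msupp0 big_nil.
rewrite !big_cons pevalD ?IH // => m.
by rewrite raddf_sum; apply: sumr_ge0 => j _; apply: F_ge0.
Qed.

Lemma pevalM p q : (forall m, 0 <= p@_m) -> (forall m, 0 <= q@_m) ->
  peval (p * q) = peval p * peval q.
Proof.
move=> p_ge0 q_ge0; rewrite mpolyME peval_sum => [|mm m]; last first.
  by rewrite mcoeffZ mcoeffX !mulr_ge0 ?ler0n.
rewrite big_allpairs mulr_suml; apply: eq_bigr => m1 _.
rewrite mulr_sumr; apply: eq_bigr => m2 _.
by rewrite pevalZX ?mulr_ge0 // abszM natrM pmonoD mulrACA.
Qed.

End NonnegEval.

Section SemifieldEval.
Variables (n : nat) (P : semifield) (y : 'I_n -> P).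
Implicit Types (p q : {mpoly int[n]}).
Local Notation peval := (peval y).
Local Notation pmono := (pmono y).

Lemma pevalX m : peval 'X_[m] = pmono m.
Proof. by rewrite -[X in peval X]scale1r pevalZX // mul1r. Qed.

Lemma pmono0 : pmono 0%MM = 1.
Proof. by apply: big1 => i _; rewrite mnm0E expr0. Qed.

Lemma pmonoU i : pmono U_(i)%MM = Some (y i).
Proof.
rewrite /pmono (bigD1 i) //= mnm1E eqxx expr1 big1 ?mulr1 // => j /negPf neq_ji.
by rewrite mnm1E eq_sym neq_ji expr0.
Qed.

Lemma peval_neq0 p : nnpoly p -> peval p != 0.
Proof.
case=> p_neq0 _; rewrite /peval.
case supp_p: (msupp p) => [|m s]; first by move/eqP: supp_p; rewrite msupp_eq0 (negPf p_neq0).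
rewrite big_cons with0_addr_neq0 // with0_mulf_neq0 ?pmono_neq0 //.
have : p@_m != 0 by rewrite -mcoeff_msupp supp_p mem_head.
by rewrite -absz_eq0; case: (`|p@_m|)%N => // k _; apply: with0_natr_neq0.
Qed.

Definition sf_peval p : P := odflt sf_one (peval p).

Lemma sf_pevalE p : nnpoly p -> peval p = Some (sf_peval p).
Proof. by move/peval_neq0; rewrite /sf_peval; case: (peval p). Qed.

Lemma sf_pevalM p q : nnpoly p -> nnpoly q ->
  sf_peval (p * q) = sf_mul (sf_peval p) (sf_peval q).
Proof.
move=> p_nn q_nn; have := sf_pevalE (nnpolyM p_nn q_nn).
have [[_ p_ge0] [_ q_ge0]] := (p_nn, q_nn).
by rewrite pevalM // (sf_pevalE p_nn) (sf_pevalE q_nn) => -[].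
Qed.

Lemma sf_pevalD p q : nnpoly p -> nnpoly q ->
  sf_peval (p + q) = sf_add (sf_peval p) (sf_peval q).
Proof.
move=> p_nn q_nn; have := sf_pevalE (nnpolyD p_nn q_nn).
have [[_ p_ge0] [_ q_ge0]] := (p_nn, q_nn).
by rewrite pevalD // (sf_pevalE p_nn) (sf_pevalE q_nn) => -[].
Qed.

Lemma sf_peval1 : sf_peval 1 = sf_one.
Proof. by have := sf_pevalE (nnpoly1 n); rewrite -mpolyX0 pevalX pmono0 => -[]. Qed.

Lemma sf_pevalX i : sf_peval 'X_i = y i.
Proof. by have := sf_pevalE (nnpolyX i); rewrite pevalX pmonoU => -[]. Qed.

End SemifieldEval.

Section QsfLift.
Variables (n : nat) (P : semifield) (y : 'I_n -> P).
Local Notation sf_peval := (sf_peval y).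

Definition Qsf_lift (f : Qsf n) : P :=
  let (p, f_pq) := cid (proj2_sig f) in let (q, _) := cid f_pq in
  sf_mul (sf_peval p) (sf_inv (sf_peval q)).

Lemma Qsf_liftE (f : Qsf n) p q : nnpoly p -> nnpoly q ->
  proj1_sig f = tofrac p / tofrac q ->
  Qsf_lift f = sf_mul (sf_peval p) (sf_inv (sf_peval q)).
Proof.
move=> p_nn q_nn f_pq; rewrite /Qsf_lift.
case: cid => p0 f_p0; case: cid => q0 [p0_nn q0_nn f_pq0].
apply: sf_eq_div; rewrite -!sf_pevalM //; congr sf_peval; apply/eqP.
rewrite -tofrac_eq !tofracM -eqr_div ?nnpoly_frac_neq0 //.
by rewrite -f_pq0 -f_pq.
Qed.

Lemma Qsf_liftM (a b : Qsf n) : Qsf_lift (sf_mul a b) = sf_mul (Qsf_lift a) (Qsf_lift b).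
Proof.
have [p [q [p_nn q_nn a_pq]]] := proj2_sig a.
have [p' [q' [p'_nn q'_nn b_pq]]] := proj2_sig b.
rewrite (Qsf_liftE p_nn q_nn a_pq) (Qsf_liftE p'_nn q'_nn b_pq).
rewrite (Qsf_liftE (nnpolyM p_nn p'_nn) (nnpolyM q_nn q'_nn)); last first.
  by rewrite /= a_pq b_pq !tofracM mulf_div.
by rewrite !sf_pevalM // sf_mulACA sf_invM.
Qed.

Lemma Qsf_liftV (a : Qsf n) : Qsf_lift (sf_inv a) = sf_inv (Qsf_lift a).
Proof.
have [p [q [p_nn q_nn a_pq]]] := proj2_sig a.
rewrite (Qsf_liftE p_nn q_nn a_pq) (@Qsf_liftE _ q p) //; last by rewrite /= a_pq invf_div.
by rewrite sf_invM sf_invK sf_mulC.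
Qed.

Lemma Qsf_liftD (a b : Qsf n) : Qsf_lift (sf_add a b) = sf_add (Qsf_lift a) (Qsf_lift b).
Proof.
have [p [q [p_nn q_nn a_pq]]] := proj2_sig a.
have [p' [q' [p'_nn q'_nn b_pq]]] := proj2_sig b.
rewrite (Qsf_liftE p_nn q_nn a_pq) (Qsf_liftE p'_nn q'_nn b_pq).
have pq'_nn := nnpolyM p_nn q'_nn; have p'q_nn := nnpolyM p'_nn q_nn.
rewrite (Qsf_liftE (nnpolyD pq'_nn p'q_nn) (nnpolyM q_nn q'_nn)); last first.
  by rewrite /= a_pq b_pq addf_div ?nnpoly_frac_neq0 // tofracD !tofracM.
rewrite sf_pevalD // !sf_pevalM // sf_mulDl sf_invM.
rewrite sf_mulACA sf_mulrV sf_mulr1 [sf_mul (sf_inv _) _]sf_mulC.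
by rewrite sf_mulACA sf_mulrV sf_mulr1.
Qed.

Lemma Qsf_lift1 : Qsf_lift sf_one = sf_one.
Proof.
rewrite (Qsf_liftE (nnpoly1 n) (nnpoly1 n)) ?sf_peval1 ?sf_inv1 ?sf_mulr1 //.
by rewrite /= divr1.
Qed.

Lemma Qsf_lift_var i : Qsf_lift (Qsf_var i) = y i.
Proof.
rewrite (Qsf_liftE (nnpolyX i) (nnpoly1 n)) ?sf_peval1 ?sf_pevalX ?sf_inv1 ?sf_mulr1 //.
by rewrite /= tofrac1 divr1.
Qed.

End QsfLift.

Section FormalCombinations.
Variables (T : Type) (R : nzRingType).
Implicit Types (G : T -> R) (l : seq (int * T)).

Definition lcomb G l : R := \sum_(e <- l) e.1%:~R * G e.2.

Definition lopp l := [seq (- e.1, e.2) | e <- l].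

Definition lmul (op : T -> T -> T) l1 l2 :=
  [seq (e1.1 * e2.1, op e1.2 e2.2) | e1 <- l1, e2 <- l2].

Lemma lcomb_cat G l1 l2 : lcomb G (l1 ++ l2) = lcomb G l1 + lcomb G l2.
Proof. exact: big_cat. Qed.

Lemma lcomb_opp G l : lcomb G (lopp l) = - lcomb G l.
Proof. by rewrite /lcomb big_map -sumrN; apply: eq_bigr => e _; rewrite intrN mulNr. Qed.

Lemma lcomb_seq1 G z t : lcomb G [:: (z, t)] = z%:~R * G t.
Proof. exact: big_seq1. Qed.

End FormalCombinations.

Lemma lcomb_mul (T : Type) (R : comNzRingType) (op : T -> T -> T) (G : T -> R) :
  {morph G : a b / op a b >-> a * b} ->
  forall l1 l2, lcomb G (lmul op l1 l2) = lcomb G l1 * lcomb G l2.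
Proof.
move=> GM l1 l2; rewrite /lcomb big_allpairs_dep mulr_suml; apply: eq_bigr => e1 _.
by rewrite mulr_sumr; apply: eq_bigr => e2 _ /=; rewrite intrM GM mulrACA.
Qed.

Lemma lcomb_undup (T : eqType) (R : nzRingType) (G : T -> R) (l : seq (int * T)) :
  lcomb G l = \sum_(t <- undup (map snd l)) (\sum_(e <- l | e.2 == t) e.1)%:~R * G t.
Proof.
under [RHS]eq_bigr => t _ do rewrite (big_morph _ (@intrD R) (mulr0z 1)) mulr_suml.
rewrite (exchange_big_dep xpredT) //=; apply: eq_big_seq => e l_e.
rewrite big_mkcond (bigD1_seq e.2) ?undup_uniq ?mem_undup ?map_f //= eqxx big1 ?addr0 //.
by move=> t /negPf; rewrite eq_sym => ->.
Qed.

Definition monomial_key (n : nat) (P : semifield) := {classic (P * ('I_n -> nat))}.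

Section Monomials.
Variables (n : nat) (P : semifield).
Implicit Types a b : monomial_key n P.

Definition key_mul a b : monomial_key n P := (sf_mul a.1 b.1, fun j => (a.2 j + b.2 j)%N).

Definition key_one : monomial_key n P := (sf_one, fun _ => 0%N).

Definition monomial (F : fieldType) (iota : P -> F) (x : 'I_n -> F) a : F :=
  iota a.1 * \prod_(j < n) x j ^+ a.2 j.

Definition monomials_free (F : fieldType) (iota : P -> F) (x : 'I_n -> F) : Prop :=
  forall (m : nat) (c : 'I_m -> int) (k : 'I_m -> P * ('I_n -> nat)),
    injective k -> zpx_eval iota x c k = 0 -> forall i, c i = 0.

Variables (F : fieldType) (iota : P -> F) (x : 'I_n -> F).
Hypothesis iota_hom : sf_hom iota.

Lemma monomialM : {morph monomial iota x : a b / key_mul a b >-> a * b}.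
Proof.
move=> a b; rewrite /monomial (proj2 iota_hom) mulrACA -big_split.
by congr (_ * _); apply: eq_bigr => j _; rewrite exprD.
Qed.

Lemma monomial1 : monomial iota x key_one = 1.
Proof. by rewrite /monomial (proj1 iota_hom) mul1r big1 // => j _; rewrite expr0. Qed.

Lemma monomial_const p : monomial iota x (p, fun _ => 0%N) = iota p.
Proof. by rewrite /monomial big1 ?mulr1 // => j _; rewrite expr0. Qed.

Lemma monomial_var i : monomial iota x (sf_one, fun j => (i == j : nat)) = x i.
Proof.
rewrite /monomial (proj1 iota_hom) mul1r (bigD1 i) //= eqxx expr1 big1 ?mulr1 //.
by move=> j /negPf; rewrite eq_sym => ->; rewrite expr0.
Qed.

Hypothesis x_free : monomials_free iota x.

Lemma monomials_free_neq0 i : x i != 0.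
Proof.
have key_inj : injective (fun _ : 'I_1 => (sf_one, fun j => (i == j : nat)) : P * _).
  by move=> u v _; rewrite !ord1.
apply/eqP => xi0; have := x_free (c := fun _ => 1) key_inj _ ord0.
rewrite /zpx_eval big_ord1 mul1r -/(monomial iota x _) monomial_var xi0 => /(_ erefl)/eqP.
by rewrite oner_eq0.
Qed.

(* A vanishing combination of free monomials has all grouped coefficients zero,
   so it vanishes under any other evaluation of the keys. *)
Lemma lcomb_free_eq0 l : lcomb (monomial iota x) l = 0 ->
  forall (R : nzRingType) (G : monomial_key n P -> R), lcomb G l = 0.
Proof.
rewrite lcomb_undup => comb0 R G; rewrite lcomb_undup; set ks := undup (map snd l).
suff coef0 t : t \in ks -> \sum_(e <- l | e.2 == t) e.1 = 0.
  by rewrite big1_seq // => t /andP[_ /coef0 ->]; rewrite mul0r.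
have ks_inj : injective (tnth (in_tuple ks)) by apply/tuple_uniqP; apply: undup_uniq.
move=> ks_t; have /tnthP[i ->] : t \in in_tuple ks by [].
apply: (x_free (c := fun i => \sum_(e <- l | e.2 == tnth (in_tuple ks) i) e.1) ks_inj).
by rewrite -comb0 /zpx_eval [in RHS]big_tnth.
Qed.

End Monomials.

Lemma sf_hom_neq0 (P : semifield) (F : fieldType) (iota : P -> F) :
  sf_hom iota -> forall a, iota a != 0.
Proof.
move=> [iota1 iotaM] a; apply/eqP => iota_a0.
by have /eqP := iotaM (sf_inv a) a; rewrite sf_mulV iota1 iota_a0 mulr0 oner_eq0.
Qed.

Section SemifieldMorphism.
Variables (P Q : semifield) (psi : P -> Q).
Hypothesis psi1 : psi sf_one = sf_one.
Hypothesis psiM : forall a b, psi (sf_mul a b) = sf_mul (psi a) (psi b).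

Lemma sf_morph_expn a k : psi (sf_expn a k) = sf_expn (psi a) k.
Proof. by elim: k => //= k IH; rewrite psiM IH. Qed.

Lemma sf_hom_comp (F : fieldType) (iota : Q -> F) : sf_hom iota -> sf_hom (iota \o psi).
Proof. by case=> iota1 iotaM; split=> [|a b] /=; rewrite ?psi1 ?psiM. Qed.

Hypothesis psiV : forall a, psi (sf_inv a) = sf_inv (psi a).

Lemma sf_morph_expz a z : psi (sf_expz a z) = sf_expz (psi a) z.
Proof. by case: z => k; rewrite /sf_expz ?psiV sf_morph_expn. Qed.

End SemifieldMorphism.

Lemma tnode_connected_ind (n : nat) (Q : tnode n -> Prop) (t0 : tnode n) :
  Q t0 -> (forall k t t', tedge k t t' -> Q t -> Q t') -> forall t, Q t.
Proof.
move=> Q_t0 Q_edge.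
have Q_root w (w_red : sorted (fun a b : 'I_n => a != b) w) :
    Q (exist _ w w_red) <-> Q (exist _ [::] (erefl true)).
  elim/last_ind: w w_red => [|w k IH] w_red.
    by rewrite (bool_irrelevance w_red (erefl true)).
  have w'_red : sorted (fun a b : 'I_n => a != b) w.
    by case: w w_red {IH} => //= a w; rewrite rcons_path => /andP[].
  have e : tedge k (exist _ w w'_red) (exist _ (rcons w k) w_red) by left.
  rewrite -(IH w'_red); split; [by apply: (Q_edge k); right | exact: Q_edge e].
by case: t0 Q_t0 => w0 w0_red /Q_root Q_w0 [w w_red]; apply/Q_root.
Qed.

Section Specialization.
Variables (n : nat) (P0 P : semifield) (F F' : fieldType).
Variables (iota : P0 -> F) (iota' : P -> F') (psi : P0 -> P).
Variables (x0 : 'I_n -> F) (x0' : 'I_n -> F').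
Hypotheses (iota_hom : sf_hom iota) (iota'_hom : sf_hom iota').
Hypothesis psi1 : psi sf_one = sf_one.
Hypothesis psiM : forall a b, psi (sf_mul a b) = sf_mul (psi a) (psi b).
Hypothesis x0_free : monomials_free iota x0.

Local Notation G := (monomial iota x0).
Local Notation G' := (monomial (iota' \o psi) x0').
Local Notation lmul := (lmul (@key_mul n P0)).

Let iota'psi_hom : sf_hom (iota' \o psi) := sf_hom_comp psi1 psiM iota'_hom.
Let GM := monomialM x0 iota_hom.
Let G'M := monomialM x0' iota'psi_hom.

Definition frac_rel (f : F) (g : F') : Prop :=
  exists num den : seq (int * monomial_key n P0),
  [/\ f = lcomb G num / lcomb G den, g = lcomb G' num / lcomb G' den
    & lcomb G' den != 0].

Lemma lcomb_monomial_neq0 l : lcomb G' l != 0 -> lcomb G l != 0.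
Proof. by apply: contra => /eqP comb0; rewrite (lcomb_free_eq0 x0_free comb0 G'). Qed.

Lemma frac_rel_functional f g1 g2 : frac_rel f g1 -> frac_rel f g2 -> g1 = g2.
Proof.
move=> [n1 [d1 [-> -> d1_neq0]]] [n2 [d2 [f_eq -> d2_neq0]]].
have comb0 : lcomb G (lmul n1 d2 ++ lopp (lmul n2 d1)) = 0.
  rewrite lcomb_cat lcomb_opp !(lcomb_mul GM); apply/eqP; rewrite subr_eq0.
  by rewrite -eqr_div ?lcomb_monomial_neq0 // f_eq.
have /eqP := lcomb_free_eq0 x0_free comb0 G'.
by rewrite lcomb_cat lcomb_opp !(lcomb_mul G'M) subr_eq0 -eqr_div // => /eqP.
Qed.

Lemma frac_relD f1 g1 f2 g2 : frac_rel f1 g1 -> frac_rel f2 g2 -> frac_rel (f1 + f2) (g1 + g2).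
Proof.
move=> [n1 [d1 [-> -> d1_neq0]]] [n2 [d2 [-> -> d2_neq0]]].
exists (lmul n1 d2 ++ lmul n2 d1), (lmul d1 d2).
rewrite !lcomb_cat !(lcomb_mul GM) !(lcomb_mul G'M) !addf_div ?lcomb_monomial_neq0 //.
by split; rewrite // mulf_neq0.
Qed.

Lemma frac_relM f1 g1 f2 g2 : frac_rel f1 g1 -> frac_rel f2 g2 -> frac_rel (f1 * f2) (g1 * g2).
Proof.
move=> [n1 [d1 [-> -> d1_neq0]]] [n2 [d2 [-> -> d2_neq0]]].
exists (lmul n1 n2), (lmul d1 d2).
by rewrite !(lcomb_mul GM) !(lcomb_mul G'M) !mulf_div; split; rewrite // mulf_neq0.
Qed.

Lemma frac_relV f g : frac_rel f g -> g != 0 -> frac_rel f^-1 g^-1.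
Proof.
move=> [num [den [-> -> den_neq0]]] g_neq0; exists den, num; rewrite !invf_div.
by split=> //; apply: contra g_neq0 => /eqP ->; rewrite mul0r.
Qed.

Lemma frac_rel_monomial a : frac_rel (G a) (G' a).
Proof.
exists [:: (1, a)], [:: (1, key_one n P0)].
by rewrite !lcomb_seq1 !monomial1 // !mul1r !divr1 oner_neq0.
Qed.

Lemma frac_rel1 : frac_rel 1 1.
Proof. by have := frac_rel_monomial (key_one n P0); rewrite !monomial1. Qed.

Lemma frac_relXn f g k : frac_rel f g -> frac_rel (f ^+ k) (g ^+ k).
Proof.
move=> fg; elim: k => [|k IH]; first by rewrite !expr0; apply: frac_rel1.
by rewrite !exprS; apply: frac_relM.
Qed.

Lemma frac_relXz f g (z : int) : frac_rel f g -> g != 0 -> frac_rel (f ^ z) (g ^ z).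
Proof.
move=> fg g_neq0; case: z => k; first exact: frac_relXn.
exact: frac_relV (frac_relXn k.+1 fg) (expf_neq0 _ g_neq0).
Qed.

Lemma frac_rel_prod (f : 'I_n -> F) (g : 'I_n -> F') :
  (forall i, frac_rel (f i) (g i)) -> frac_rel (\prod_(i < n) f i) (\prod_(i < n) g i).
Proof. by move=> fg; apply: (big_ind2 frac_rel frac_rel1 frac_relM). Qed.

Lemma frac_rel_iota p : frac_rel (iota p) (iota' (psi p)).
Proof. by have := frac_rel_monomial (p, fun _ => 0%N); rewrite !monomial_const. Qed.

Lemma frac_rel_x0 i : frac_rel (x0 i) (x0' i).
Proof.
by have := frac_rel_monomial (sf_one, fun j => (i == j : nat)); rewrite !monomial_var.
Qed.

Hypothesis psiV : forall a, psi (sf_inv a) = sf_inv (psi a).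
Hypothesis psiD : forall a b, psi (sf_add a b) = sf_add (psi a) (psi b).

Definition seed_spec (s : seed n P0 F) (s' : seed n P F') : Prop :=
  [/\ forall i, frac_rel (sx s i) (sx s' i), forall i, psi (sy s i) = sy s' i & sB s = sB s'].

Lemma seed_spec_mutate k s s' : seed_spec s s' -> (forall i, sx s' i != 0) ->
  seed_spec (mutate iota k s) (mutate iota' k s').
Proof.
move=> [spec_x spec_y spec_B] x'_neq0; split=> [i|i|] /=; last by rewrite spec_B.
  case: (i == k); last exact: spec_x.
  rewrite -spec_B -!spec_y -psi1 -psiD.
  have rel_exp (z : 'I_n -> int) :
      frac_rel (\prod_(j < n) sx s j ^ z j) (\prod_(j < n) sx s' j ^ z j).
    by apply: frac_rel_prod => j; apply: frac_relXz.
  apply: frac_relM; last exact: frac_relV (frac_rel_iota _) (sf_hom_neq0 iota'_hom _).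
  apply: frac_relM; first exact: frac_relM (frac_relV (spec_x k) (x'_neq0 k)) (rel_exp _).
  exact: frac_relD frac_rel1 (frac_relM (frac_rel_iota _) (rel_exp _)).
case: (i == k); first by rewrite psiV spec_y.
by rewrite !psiM !(sf_morph_expz psi1 psiM psiV) psiD psi1 !spec_y spec_B.
Qed.

Lemma seed_spec_eq s1 s2 s1' s2' :
  seed_eq s1 s2 -> seed_eq s1' s2' -> seed_spec s2 s2' -> seed_spec s1 s1'.
Proof.
move=> [eq_x [eq_y eq_B]] [eq_x' [eq_y' eq_B']] [spec_x spec_y spec_B].
by split=> [i|i|]; rewrite ?eq_x ?eq_x' ?eq_y ?eq_y' ?eq_B ?eq_B'.
Qed.

Lemma cluster_pattern_spec (Sigma : tnode n -> seed n P0 F)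
    (Sigma' : tnode n -> seed n P F') (t0 : tnode n) :
  cluster_pattern iota Sigma -> cluster_pattern iota' Sigma' ->
  seed_spec (Sigma t0) (Sigma' t0) -> forall t, seed_spec (Sigma t) (Sigma' t).
Proof.
move=> [_ [_ mut]] [_ [seeds' mut']] spec_t0.
apply: (@tnode_connected_ind _ _ t0) => // k u u' e spec_u.
apply: seed_spec_eq (mut k u u' e) (mut' k u u' e) (seed_spec_mutate _ spec_u _).
exact: monomials_free_neq0 iota'_hom (proj1 (proj1 (seeds' u))).
Qed.

End Specialization.

Theorem proposition2p26 (n : nat)
    (F : fieldType) (iota : Qsf n -> F) (Sigma : tnode n -> seed n (Qsf n) F)
    (t0 : tnode n)
    (HSigma : cluster_pattern iota Sigma) (Hfree : free_coeffs_at Sigma t0)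
    (P : semifield) (F' : fieldType) (iota' : P -> F') (Sigma' : tnode n -> seed n P F')
    (HSigma' : cluster_pattern iota' Sigma')
    (HB : forall t, sB (Sigma t) = sB (Sigma' t))
    (t t' : tnode n) (sigma : 'S_n) :
  seed_eq (Sigma t) (perm_seed sigma (Sigma t')) ->
  seed_eq (Sigma' t) (perm_seed sigma (Sigma' t')).
Proof.
move=> [eq_x [eq_y eq_B]].
have [iota_hom [seeds _]] := HSigma; have [iota'_hom _] := HSigma'.
pose y' := sy (Sigma' t0).
have [psi1 psiM] := (Qsf_lift1 y', Qsf_liftM y').
have x0_free : monomials_free iota (sx (Sigma t0)) := proj1 (proj1 (seeds t0)).
have spec_t0 : seed_spec iota iota' (Qsf_lift y') (sx (Sigma t0)) (sx (Sigma' t0))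
                 (Sigma t0) (Sigma' t0).
  split=> [i|i|]; last exact: HB.
    exact: frac_rel_x0 iota_hom iota'_hom psi1 psiM i.
  by rewrite Hfree Qsf_lift_var.
have spec := cluster_pattern_spec iota_hom iota'_hom psi1 psiM x0_free
  (Qsf_liftV y') (Qsf_liftD y') HSigma HSigma' spec_t0.
have [[spec_x spec_y spec_B] [spec_x' spec_y' spec_B']] := (spec t, spec t').
split; [|split].
- move=> i; apply: (frac_rel_functional iota_hom iota'_hom psi1 psiM x0_free (spec_x i)).
  by rewrite eq_x; apply: spec_x'.
- by move=> i; rewrite -spec_y eq_y spec_y'.
- by rewrite -spec_B eq_B /= spec_B'.
Qed.
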